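(* There is no monoid over $\mathbb{C}^2$ — i.e. no set $M\subseteq\mathbb{C}^2$ of pairwise distinct vectors with an associative linear map $\mu:\mathbb{C}^2\otimes\mathbb{C}^2\to\mathbb{C}^2$ and a unit $e\in M$ — such that the multiplication $(a,b)\mapsto\mu(a\otimes b)$ on $M$ is isomorphic to the multiplication of the group $\hat Q$ of unit quaternions.
   Context: A monoid over $\mathbb{C}^2$ is a set $M\subseteq\mathbb{C}^2$ of pairwise distinct vectors, a linear map $\mu:\mathbb{C}^2\otimes\mathbb{C}^2\to\mathbb{C}^2$ with $\mu\circ(\mu\otimes\mathrm{id}) = \mu\circ(\mathrm{id}\otimes\mu)$, and $e\in M$ with $\mu(e\otimes m)=m=\mu(m\otimes e)$ for all $m\in M$. $\hat Q$ is the (non-commutative) group of quaternions $q_w+iq_x+jq_y+kq_z$ of unit length under quaternion multiplication ($i^2=j^2=k^2=ijk=-1$). *)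

From HB Require Import structures.
From mathcomp Require Import all_boot all_algebra complex reals.
Set Implicit Arguments. Unset Strict Implicit. Unset Printing Implicit Defensive.
Import GRing.Theory Num.Theory.
Local Open Scope ring_scope.

Definition C2 (R : realType) := 'rV[R[i]]_2.

(* A linear map mu : C^2 (x) C^2 -> C^2 is determined by its structure
   constants on the basis e_i (x) e_j:  mu(e_i (x) e_j) = sum_k c i j k e_k.
   mu_app c a b = mu(a (x) b). *)
Definition mu_app (R : realType) (c : 'I_2 -> 'I_2 -> 'I_2 -> R[i])
  (a b : C2 R) : C2 R :=
  \row_(k < 2) \sum_(i < 2) \sum_(j < 2) c i j k * a ord0 i * b ord0 j.

(* associativity mu o (mu (x) id) = mu o (id (x) mu); by linearity it is
   equivalent to checking it on pure tensors a (x) b (x) c, for all a b c. *)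
Definition mu_assoc (R : realType) (c : 'I_2 -> 'I_2 -> 'I_2 -> R[i]) : Prop :=
  forall a b d : C2 R, mu_app c (mu_app c a b) d = mu_app c a (mu_app c b d).

Definition monoid_over_C2 (R : realType) (M : C2 R -> Prop)
  (c : 'I_2 -> 'I_2 -> 'I_2 -> R[i]) (e : C2 R) : Prop :=
  mu_assoc c /\ M e /\ (forall m, M m -> mu_app c e m = m /\ mu_app c m e = m).

Record quat (R : realType) := Quat { qw : R; qx : R; qy : R; qz : R }.

Definition qmul (R : realType) (p q : quat R) : quat R :=
  Quat (qw p * qw q - qx p * qx q - qy p * qy q - qz p * qz q)
       (qw p * qx q + qx p * qw q + qy p * qz q - qz p * qy q)
       (qw p * qy q - qx p * qz q + qy p * qw q + qz p * qx q)
       (qw p * qz q + qx p * qy q - qy p * qx q + qz p * qw q).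

Definition unitq (R : realType) (q : quat R) : Prop :=
  qw q ^+ 2 + qx q ^+ 2 + qy q ^+ 2 + qz q ^+ 2 = 1.

Definition iso_to_Qhat (R : realType) (M : C2 R -> Prop)
  (c : 'I_2 -> 'I_2 -> 'I_2 -> R[i]) : Prop :=
  exists f : quat R -> C2 R,
    (forall q, unitq q -> M (f q)) /\
    (forall p q, unitq p -> unitq q -> f p = f q -> p = q) /\
    (forall m, M m -> exists q, unitq q /\ f q = m) /\
    (forall p q, unitq p -> unitq q -> f (qmul p q) = mu_app c (f p) (f q)).

(* A linear map C^2 (x) C^2 -> C^2 is a bilinear product on a 2-dimensional
   space, and there two elements commuting with a common nonzero element E
   commute with each other: either the first one is a multiple of E, or
   together with E it spans the space.  An isomorphism f from \hat Q onto
   (M, mu) makes f 1 commute with f i and f j, and f 1 != 0 because otherwise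
   f (-1) = f 1 * f (-1) = 0 = f 1.  Hence f k = f i * f j = f j * f i = f (-k),
   contradicting injectivity. *)

From mathcomp Require Import all_boot all_algebra complex reals.
From mathcomp Require Import ring lra.

Set Implicit Arguments.
Unset Strict Implicit.
Unset Printing Implicit Defensive.

Import GRing.Theory Num.Theory.
Local Open Scope ring_scope.

Section TwoDimensionalAlgebra.

Variables (F : fieldType) (mul : 'rV[F]_2 -> 'rV[F]_2 -> 'rV[F]_2).
Hypothesis mul_lincombl : forall a b x y z,
  mul (a *: x + b *: y) z = a *: mul x z + b *: mul y z.
Hypothesis mul_lincombr : forall a b x y z,
  mul z (a *: x + b *: y) = a *: mul z x + b *: mul z y.

Lemma mulZl a x z : mul (a *: x) z = a *: mul x z.
Proof. by have := mul_lincombl a 0 x x z; rewrite !scale0r !addr0. Qed.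

Lemma mulZr a x z : mul z (a *: x) = a *: mul z x.
Proof. by have := mul_lincombr a 0 x x z; rewrite !scale0r !addr0. Qed.

Lemma mul0l x : mul 0 x = 0.
Proof. by rewrite -(scale0r 0) mulZl !scale0r. Qed.

Lemma rV2_span (E I : 'rV[F]_2) : E != 0 -> ~~ (I <= E)%MS ->
  forall J, exists a b, J = a *: E + b *: I.
Proof.
move=> E_neq0 I_notin_E J.
have EI_full : row_full (E + I)%MS.
  have : (E < E + I)%MS.
    rewrite ltmxE addsmxSl /=; apply: contra I_notin_E.
    exact: submx_trans (addsmxSr E I).
  rewrite ltmxErank rank_rV E_neq0 /row_full => /andP[_ rank_gt1].
  by rewrite eqn_leq rank_leq_col.
have /sub_addsmxP[[u v] /= ->] := submx_full J EI_full.
have /sub_rVP[a ->] := submxMl u E; have /sub_rVP[b ->] := submxMl v I.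
by exists a, b.
Qed.

Lemma rV2_commute_trans (E I J : 'rV[F]_2) : E != 0 ->
  mul E I = mul I E -> mul E J = mul J E -> mul I J = mul J I.
Proof.
move=> E_neq0 EI EJ.
have [/sub_rVP[a ->]|I_notin_E] := boolP (I <= E)%MS.
  by rewrite mulZl mulZr EJ.
have [a [b ->]] := rV2_span E_neq0 I_notin_E J.
by rewrite mul_lincombl mul_lincombr EI.
Qed.

End TwoDimensionalAlgebra.

Lemma mu_app_lincombl (R : realType) (c : 'I_2 -> 'I_2 -> 'I_2 -> R[i]) a b x y z :
  mu_app c (a *: x + b *: y) z = a *: mu_app c x z + b *: mu_app c y z.
Proof.
apply/rowP => k; rewrite !mxE !mulr_sumr -big_split; apply: eq_bigr => i _.
rewrite !mulr_sumr -big_split; apply: eq_bigr => j _; rewrite !mxE /=; ring.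
Qed.

Lemma mu_app_lincombr (R : realType) (c : 'I_2 -> 'I_2 -> 'I_2 -> R[i]) a b x y z :
  mu_app c z (a *: x + b *: y) = a *: mu_app c z x + b *: mu_app c z y.
Proof.
apply/rowP => k; rewrite !mxE !mulr_sumr -big_split; apply: eq_bigr => i _.
rewrite !mulr_sumr -big_split; apply: eq_bigr => j _; rewrite !mxE /=; ring.
Qed.

Definition quat1 {R : realType} : quat R := Quat 1 0 0 0.
Definition quati {R : realType} : quat R := Quat 0 1 0 0.
Definition quatj {R : realType} : quat R := Quat 0 0 1 0.
Definition quatk {R : realType} : quat R := Quat 0 0 0 1.
Definition qopp (R : realType) (q : quat R) : quat R :=
  Quat (- qw q) (- qx q) (- qy q) (- qz q).

Section Quaternions.

Variable R : realType.
Implicit Types q : quat R.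

Lemma qmul1q q : qmul quat1 q = q.
Proof. by case: q => w x y z; rewrite /qmul /=; congr Quat; ring. Qed.

Lemma qmulq1 q : qmul q quat1 = q.
Proof. by case: q => w x y z; rewrite /qmul /=; congr Quat; ring. Qed.

Lemma qmul_ij : qmul quati quatj = quatk :> quat R.
Proof. by rewrite /qmul /quatk /=; congr Quat; ring. Qed.

Lemma qmul_ji : qmul quatj quati = qopp quatk :> quat R.
Proof. by rewrite /qmul /qopp /=; congr Quat; ring. Qed.

Lemma unitq1 : unitq (quat1 : quat R). Proof. by rewrite /unitq /=; ring. Qed.
Lemma unitqi : unitq (quati : quat R). Proof. by rewrite /unitq /=; ring. Qed.
Lemma unitqj : unitq (quatj : quat R). Proof. by rewrite /unitq /=; ring. Qed.
Lemma unitqk : unitq (quatk : quat R). Proof. by rewrite /unitq /=; ring. Qed.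

Lemma unitq_opp q : unitq q -> unitq (qopp q).
Proof. by rewrite /unitq /= !sqrrN. Qed.

Lemma qopp_neq q : unitq q -> qopp q <> q.
Proof. by case: q => w x y z; rewrite /unitq /= => uq [hw hx hy hz]; nra. Qed.

End Quaternions.

Theorem corollary4p3 (R : realType) :
  ~ exists (M : C2 R -> Prop) (c : 'I_2 -> 'I_2 -> 'I_2 -> R[i]) (e : C2 R),
      monoid_over_C2 M c e /\ iso_to_Qhat M c.
Proof.
case=> M [c [e [_ [f [_ [f_inj [_ f_mul]]]]]]].
have u1 := unitq1 R; have ui := unitqi R; have uj := unitqj R; have uk := unitqk R.
have f1_neq0 : f quat1 != 0.
  apply/eqP => f1_eq0; apply: (qopp_neq u1); apply: (f_inj _ _ (unitq_opp u1) u1).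
  rewrite -{1}(qmul1q (qopp quat1)) (f_mul _ _ u1 (unitq_opp u1)) f1_eq0.
  exact: (mul0l (mu_app_lincombl c)).
have f1_comm q : unitq q -> mu_app c (f quat1) (f q) = mu_app c (f q) (f quat1).
  by move=> uq; rewrite -!f_mul // qmul1q qmulq1.
have := rV2_commute_trans (mu_app_lincombl c) (mu_app_lincombr c) f1_neq0
  (f1_comm _ ui) (f1_comm _ uj).
rewrite -!f_mul // qmul_ij qmul_ji => /(f_inj _ _ uk (unitq_opp uk))/esym.
exact: qopp_neq.
Qed.
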